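(* Let $\nu\in\mathbb{R}$, $\beta^1>\beta^2>\beta^3>0$, and let $\mathcal H_0=-\sqrt{\beta^1\beta^2\beta^3}\,\alpha_0$, $\mathcal N=\frac1{\beta^1}+\frac1{\beta^2}+\frac1{\beta^3}-\nu+2\alpha_0$. The reciprocal transformation $dx=\mathcal H_0\,dy+\mathcal N\,d\tau_-$, $dt=d\tau_-$ transforms the Whitham equations of the first negative KdV flow $$\partial_{\tau_-}\beta^i+v^i(\boldsymbol\beta)\partial_y\beta^i=0,\qquad v^i=\frac{2}{\sqrt{\beta^1\beta^2\beta^3}}\left(1-\frac{\prod_{j\ne i}(\beta^i-\beta^j)}{\beta^i(\beta^i+\alpha_1)}\right),$$ into the Camassa--Holm Whitham equations $$\partial_t\beta^i+\tilde C^i(\boldsymbol\beta)\partial_x\beta^i=0,\qquad \tilde C^i(\boldsymbol\beta)=\frac1{\beta^1}+\frac1{\beta^2}+\frac1{\beta^3}-\nu+2\frac{\alpha_0\prod_{j\ne i}(\beta^i-\beta^j)}{\beta^i(\beta^i+\alpha_1)},$$ $i=1,2,3$. Conversely, the inverse reciprocal transformation $dy=\frac1{\mathcal H_0}dx-\frac{\mathcal N}{\mathcal H_0}dt$, $d\tau_-=dt$, transforms the second system into the first.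
   Context: $a$ is a closed cycle on $w^2=(\eta-\beta^1)(\eta-\beta^2)(\eta-\beta^3)$ encircling $[\beta^2,\beta^1]$; $\alpha_1$ and $\alpha_0$ are defined by $\oint_a\frac{(\eta+\alpha_1)d\eta}{w}=0$ and $\oint_a\frac{(1/\eta+\alpha_0)d\eta}{w}=0$. The variables $\beta^i=1/(u^i+\nu)$, where $u^1<u^2<u^3$ are the Riemann invariants of the Camassa--Holm one-phase Whitham equations; in these variables the CH Whitham speeds are the $\tilde C^i$ above. The statement means: if $\boldsymbol\beta(y,\tau_-)$ solves the first system and $(x,t)$ are defined by integrating $dx=\mathcal H_0dy+\mathcal Nd\tau_-$, $dt=d\tau_-$, then $\boldsymbol\beta$ as a function of $(x,t)$ solves the second, and vice versa. *)

From HB Require Import structures.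
From mathcomp Require Import all_boot all_order all_algebra.
From mathcomp Require Import all_classical all_reals all_analysis.
Set Implicit Arguments. Unset Strict Implicit. Unset Printing Implicit Defensive.
Import Order.TTheory GRing.Theory Num.Theory.
Import numFieldNormedType.Exports.
Local Open Scope classical_set_scope.
Local Open Scope ring_scope.

Section CHWhitham.
Variable R : realType.

(* Riemann invariants beta^1, beta^2, beta^3 are b i1, b i2, b i3. *)
Definition i1 : 'I_3 := @Ordinal 3 0 isT.
Definition i2 : 'I_3 := @Ordinal 3 1 isT.
Definition i3 : 'I_3 := @Ordinal 3 2 isT.

Definition ordered_beta (b : 'I_3 -> R) : Prop :=
  b i1 > b i2 /\ b i2 > b i3 /\ b i3 > 0.

(* w^2 = (eta - beta^1)(eta - beta^2)(eta - beta^3) *)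
Definition cubic (b : 'I_3 -> R) (eta : R) : R := \prod_(j < 3) (eta - b j).

(* On the cycle a (encircling [beta^2, beta^1]) one has
   oint_a f(eta) d eta / w = c * int_{beta^2}^{beta^1} f(eta) d eta / sqrt(-w^2)
   with a nonzero constant c (w is purely imaginary on the cut), so the
   vanishing of the period is the vanishing of the following real integral. *)
Definition aperiod (b : 'I_3 -> R) (f : R -> R) : R :=
  Rintegral (@lebesgue_measure R) `]b i2, b i1[
    (fun eta => f eta / Num.sqrt (- cubic b eta)).

(* alpha_1 : oint_a (eta + alpha_1) d eta / w = 0 ;
   alpha_0 : oint_a (1/eta + alpha_0) d eta / w = 0  (linear in alpha). *)
Definition alpha1 (b : 'I_3 -> R) : R :=
  - aperiod b (fun eta => eta) / aperiod b (fun _ => 1).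
Definition alpha0 (b : 'I_3 -> R) : R :=
  - aperiod b (fun eta => eta^-1) / aperiod b (fun _ => 1).

Definition sqrt_prod (b : 'I_3 -> R) : R := Num.sqrt (\prod_(j < 3) b j).

Definition H0 (b : 'I_3 -> R) : R := - sqrt_prod b * alpha0 b.
Definition Ncoef (nu : R) (b : 'I_3 -> R) : R :=
  \sum_(j < 3) (b j)^-1 - nu + 2 * alpha0 b.

Definition prod_diff (b : 'I_3 -> R) (i : 'I_3) : R :=
  \prod_(j < 3 | j != i) (b i - b j).

Definition vKdV (b : 'I_3 -> R) (i : 'I_3) : R :=
  2 / sqrt_prod b * (1 - prod_diff b i / (b i * (b i + alpha1 b))).

Definition CCH (nu : R) (b : 'I_3 -> R) (i : 'I_3) : R :=
  \sum_(j < 3) (b j)^-1 - nu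
  + 2 * (alpha0 b * prod_diff b i) / (b i * (b i + alpha1 b)).

Definition d1 (f : R * R -> R) (p : R * R) : R := 'D_((1, 0) : R * R) f p.
Definition d2 (f : R * R -> R) (p : R * R) : R := 'D_((0, 1) : R * R) f p.

(* u = (u^1,u^2,u^3), functions of (first coord, second coord) = (space, time),
   solves  d_time u^i + speed(u)_i d_space u^i = 0  at every point of D. *)
Definition whitham_sol (D : set (R * R))
    (speed : ('I_3 -> R) -> 'I_3 -> R) (u : 'I_3 -> R * R -> R) : Prop :=
  forall p, D p -> forall i : 'I_3,
    differentiable (u i) p /\
    d2 (u i) p + speed (fun j => u j p) i * d1 (u i) p = 0.

End CHWhitham.

(* Both directions are one chain-rule identity.  If f(p) = g(Z(p), p_2) then
   d_2 f + c d_1 f = d_2 g + (d_2 Z + c d_1 Z) d_1 g at (Z(p), p_2), so a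
   solution of a diagonal system with speeds c becomes a solution of the system
   with speeds d_2 Z + c d_1 Z.  For x = X(y, tau_-) this turns v^i into
   N + H_0 v^i, which is C^i by algebra; for the inverse map it turns C^i into
   (C^i - N) / H_0 = v^i, which needs H_0 <> 0.  Now H_0 > 0: the periods
   defining alpha_0 are integrals over ]beta^2, beta^1[ of positive functions
   whose only singularities are of inverse square root type at the endpoints,
   so they are finite and positive, and alpha_0 < 0.  Finiteness matters,
   since Rintegral returns 0 for a non-integrable function. *)

From HB Require Import structures.
From mathcomp Require Import all_boot all_order all_algebra.
From mathcomp Require Import all_classical all_reals all_analysis.
From mathcomp Require Import measurable_realfun ring lra.
Import Order.TTheory GRing.Theory Num.Theory.
Import numFieldNormedType.Exports.
Local Open Scope classical_set_scope.
Local Open Scope ring_scope.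

Section ReciprocalTransformation.
Variable R : realType.

Lemma diff_coordE (g : R * R -> R) q (a c : R) : differentiable g q ->
  'd g q (a, c) = a * d1 g q + c * d2 g q.
Proof.
move=> dg; rewrite /d1 /d2 !deriveE //.
have -> : (a, c) = a *: ((1, 0) : R * R) + c *: (0, 1).
  change ((a, c) = (a * 1 + c * 0, a * 0 + c * 1)).
  by rewrite !mulr0 !mulr1 addr0 add0r.
by rewrite linearD !linearZ.
Qed.

Lemma differentiable_snd (p : R * R) : differentiable (@snd R R) p.
Proof.
pose sL : {linear (R * R)%type -> R} := snd.
have cs : continuous sL by move=> q; exact: cvg_snd.
exact: (linear_differentiable _ cs).
Qed.

Lemma diff_sndE (p v : R * R) : 'd (@snd R R) p v = v.2.
Proof.
pose sL : {linear (R * R)%type -> R} := snd.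
have cs : continuous sL by move=> q; exact: cvg_snd.
by rewrite (diff_lin _ cs).
Qed.

Lemma derive_reciprocal_comp {D : set (R * R)} {f g Z : R * R -> R}
    {p : R * R} v :
  open D -> D p -> (forall q, D q -> f q = g (Z q, q.2)) ->
  differentiable Z p -> differentiable g (Z p, p.2) ->
  'D_v f p = 'D_v Z p * d1 g (Z p, p.2) + v.2 * d2 g (Z p, p.2).
Proof.
move=> oD Dp fE dZ dg.
have dsnd := differentiable_snd p.
have dpair : differentiable (fun q => (Z q, q.2)) p.
  exact: differentiable_pair.
have -> : 'D_v f p = 'D_v (g \o fun q => (Z q, q.2)) p.
  apply: near_eq_derive; move: oD; rewrite openE => /(_ p Dp).
  by apply: filterS => q; exact: fE.
rewrite deriveE; last exact: differentiable_comp.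
rewrite diff_comp //= diff_pair // diff_coordE // -(deriveE _ dZ).
by congr (_ + _ * _); exact: diff_sndE.
Qed.

Lemma reciprocal_transport {D : set (R * R)} {f g Z : R * R -> R}
    {p : R * R} c :
  open D -> D p -> (forall q, D q -> f q = g (Z q, q.2)) ->
  differentiable Z p -> differentiable g (Z p, p.2) ->
  d2 f p + c * d1 f p =
  d2 g (Z p, p.2) + (d2 Z p + c * d1 Z p) * d1 g (Z p, p.2).
Proof.
move=> oD Dp fE dZ dg.
have compE v := derive_reciprocal_comp v oD Dp fE dZ dg.
by rewrite /d1 /d2 !compE /d1 /d2 /=; ring.
Qed.

Lemma whitham_sol_reciprocal (D : set (R * R))
    (speed speed' : ('I_3 -> R) -> 'I_3 -> R)
    (f g : 'I_3 -> R * R -> R) (Z : R * R -> R) :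
  open D -> (forall p, D p -> differentiable Z p) ->
  (forall p, D p -> forall i, differentiable (g i) (Z p, p.2)) ->
  (forall p, D p -> forall i, f i p = g i (Z p, p.2)) ->
  (forall p, D p -> forall i,
     speed' (fun j => f j p) i = d2 Z p + speed (fun j => f j p) i * d1 Z p) ->
  whitham_sol D speed f -> whitham_sol [set (Z p, p.2) | p in D] speed' g.
Proof.
move=> oD dZ dg fE speedE sol _ [p Dp <-] i; split; first exact: dg.
have [_ solp] := sol p Dp i.
have -> : (fun j => g j (Z p, p.2)) = (fun j => f j p).
  by apply/funext => j; rewrite fE.
have fiE q Dq : f i q = g i (Z q, q.2) := fE q Dq i.
by rewrite speedE // -(reciprocal_transport _ oD Dp fiE (dZ p Dp) (dg p Dp i)).
Qed.

End ReciprocalTransformation.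

Section PeriodIntegrals.
Variable R : realType.
Notation mu := (@lebesgue_measure R).

Lemma is_derive_sqrt_subr {a x : R} : a < x ->
  is_derive x 1 (fun y => Num.sqrt (y - a)) (2 * Num.sqrt (x - a))^-1.
Proof.
move=> ax.
have -> : (fun y => Num.sqrt (y - a)) = Num.sqrt \o (fun y => y - a) by [].
apply: is_derive_eq; first apply: is_derive1_comp.
- by apply: is_derive1_sqrt; rewrite subr_gt0.
- by rewrite subr0 mulr1.
Qed.

Lemma is_derive_sqrt_rsub {b x : R} : x < b ->
  is_derive x 1 (fun y => Num.sqrt (b - y)) (- (2 * Num.sqrt (b - x))^-1).
Proof.
move=> xb.
have -> : (fun y => Num.sqrt (b - y)) = Num.sqrt \o (fun y => b - y) by [].
apply: is_derive_eq; first apply: is_derive1_comp.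
- by apply: is_derive1_sqrt; rewrite subr_gt0.
- by rewrite add0r mul1r mulrN1.
Qed.

Lemma continuous_inv_sqrt (f : R -> R) x : 0 < f x -> {for x, continuous f} ->
  {for x, continuous (fun y => (Num.sqrt (f y))^-1)}.
Proof.
move=> fx0 cf; apply: continuousV; first by rewrite gt_eqF // sqrtr_gt0.
exact: (continuous_comp cf (@sqrt_continuous R (f x))).
Qed.

Definition inv_sqrt_ends (a b x : R) : R :=
  (Num.sqrt (x - a))^-1 + (Num.sqrt (b - x))^-1.

Lemma inv_sqrt_ends_ge0 (a b x : R) : 0 <= inv_sqrt_ends a b x.
Proof. by rewrite addr_ge0 // invr_ge0 sqrtr_ge0. Qed.

Lemma continuous_inv_sqrt_ends (a b x : R) : a < x < b ->
  {for x, continuous (inv_sqrt_ends a b)}.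
Proof.
move=> /andP[ax xb]; apply: continuousD; apply: continuous_inv_sqrt.
- by rewrite subr_gt0.
- by apply: continuousB; [exact: cvg_id | exact: cvg_cst].
- by rewrite subr_gt0.
- by apply: continuousB; [exact: cvg_cst | exact: cvg_id].
Qed.

Lemma measurable_inv_sqrt_ends (a b : R) :
  measurable_fun `]a, b[ (inv_sqrt_ends a b).
Proof.
apply: open_continuous_measurable_fun; first exact: interval_open.
by move=> x; rewrite inE /= in_itv /=; exact: continuous_inv_sqrt_ends.
Qed.

Lemma is_derive_sqrt_ends (a b x : R) : a < x < b ->
  is_derive x 1 (fun y => 2 * Num.sqrt (y - a) - 2 * Num.sqrt (b - y))
    (inv_sqrt_ends a b x).
Proof.
move=> /andP[ax xb].
have -> : (fun y => 2 * Num.sqrt (y - a) - 2 * Num.sqrt (b - y)) =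
          2 \*: (fun y => Num.sqrt (y - a)) - 2 \*: (fun y => Num.sqrt (b - y)).
  by apply/funext.
apply: is_derive_eq.
  exact: is_deriveB (is_deriveZ 2 (is_derive_sqrt_subr ax))
                    (is_deriveZ 2 (is_derive_sqrt_rsub xb)).
have sa : Num.sqrt (x - a) != 0 by rewrite gt_eqF // sqrtr_gt0 subr_gt0.
have sb : Num.sqrt (b - x) != 0 by rewrite gt_eqF // sqrtr_gt0 subr_gt0.
by rewrite /inv_sqrt_ends /GRing.scale /=; field; rewrite sa sb.
Qed.

Lemma integral_inv_sqrt_ends_le (a b c d : R) : a < c -> c < d -> d < b ->
  (\int[mu]_(x in `[c, d]) (inv_sqrt_ends a b x)%:E
     <= (4 * Num.sqrt (b - a))%:E)%E.
Proof.
move=> ac cd db.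
pose G y := 2 * Num.sqrt (y - a) - 2 * Num.sqrt (b - y).
have inab y : c <= y <= d -> a < y < b.
  by move=> /andP[cy yd]; apply/andP; split; lra.
have dG y : c <= y <= d -> is_derive y 1 G (inv_sqrt_ends a b y).
  by move/inab; exact: is_derive_sqrt_ends.
have cG y : c <= y <= d -> {for y, continuous G}.
  move/dG/(@ex_derive _ _ _ _ _ _ _)/derivable1_diffP.
  exact: differentiable_continuous.
rewrite (@continuous_FTC2 _ _ G c d cd).
- rewrite -EFinB lee_fin /G.
  have sd : Num.sqrt (d - a) <= Num.sqrt (b - a) by apply: ler_wsqrtr; lra.
  have sc : Num.sqrt (b - c) <= Num.sqrt (b - a) by apply: ler_wsqrtr; lra.
  have := sqrtr_ge0 (b - d); have := sqrtr_ge0 (c - a).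
  lra.
- apply: continuous_in_subspaceT => y; rewrite inE /= in_itv /=.
  by move/inab; exact: continuous_inv_sqrt_ends.
- split.
  + move=> y; rewrite in_itv /= => /andP[cy yd].
    by apply: (@ex_derive _ _ _ _ _ _ _ (dG y _)); rewrite !ltW.
  + by apply: cvg_at_right_filter; apply: cG; rewrite lexx ltW.
  + by apply: cvg_at_left_filter; apply: cG; rewrite lexx ltW.
- move=> y; rewrite in_itv /= => /andP[cy yd]; rewrite derive1E.
  by apply: (@derive_val _ _ _ _ _ _ _ (dG y _)); rewrite !ltW.
Qed.

Lemma itv_oo_bigcup_cc (a b : R) : a < b ->
  `]a, b[%classic =
  \bigcup_n `[a + (b - a) / n.+3%:R, b - (b - a) / n.+3%:R]%classic.
Proof.
move=> ab; apply/seteqP; split => x /=; last first.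
  move=> [n _]; rewrite /= !in_itv /=.
  have : 0 < (b - a) / n.+3%:R by rewrite divr_gt0 ?subr_gt0.
  set e := (b - a) / _ => e_gt0 /andP[xa xb].
  by apply/andP; split; lra.
rewrite in_itv /= => /andP[ax xb].
pose r := Num.min (x - a) (b - x).
have r_gt0 : 0 < r by rewrite lt_min !subr_gt0 ax xb.
exists (Num.truncn ((b - a) / r)) => //; rewrite /= in_itv /=.
have : (b - a) / (Num.truncn ((b - a) / r)).+3%:R <= r.
  have := truncnS_gt ((b - a) / r); rewrite ltr_pdivrMr // => lt_ba.
  rewrite ler_pdivrMr // mulrC; apply: ltW (lt_le_trans lt_ba _).
  by rewrite ler_pM2r // ler_nat ltnW.
set e := (b - a) / _ => le_e.
have : r <= x - a by rewrite ge_min lexx.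
have : r <= b - x by rewrite ge_min lexx orbT.
by move=> ? ?; apply/andP; split; lra.
Qed.

Lemma ge0_integral_itv_oo_le (f : R -> R) (a b M : R) : a < b ->
  measurable_fun `]a, b[ f -> (forall x, a < x < b -> 0 <= f x) ->
  (forall c d, a < c -> c < d -> d < b ->
     (\int[mu]_(x in `[c, d]) (f x)%:E <= M%:E)%E) ->
  (\int[mu]_(x in `]a, b[) (f x)%:E <= M%:E)%E.
Proof.
move=> ab mf f0 bnd.
pose e n := (b - a) / n.+3%:R.
have e_gt0 n : 0 < e n by rewrite divr_gt0 ?subr_gt0.
have e_lt n : e n < (b - a) / 2.
  by rewrite ltr_pM2l ?subr_gt0 // ltf_pV2 ?posrE // ltr_nat.
have e_le n m : (n <= m)%N -> e m <= e n.
  by move=> nm; rewrite ler_pM2l ?subr_gt0 // lef_pV2 ?posrE // ler_nat ltnS.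
pose F n := `[a + e n, b - e n]%classic.
have F_nd : nondecreasing_seq F.
  move=> n m /e_le nm; rewrite subsetEset => x; rewrite /F /= !in_itv /=.
  by move=> /andP[h1 h2]; apply/andP; split; lra.
have F_cup : \bigcup_n F n = `]a, b[%classic by rewrite itv_oo_bigcup_cc.
have F_sub n : F n `<=` `]a, b[ by rewrite -F_cup; exact: bigcup_sup.
have mF n : measurable (F n) by exact: measurable_itv.
have mfF n : measurable_fun (F n) (EFin \o f).
  apply/measurable_EFinP.
  exact: measurable_funS (measurable_itv _) (F_sub n) mf.
have fF0 n x : F n x -> (0 <= (f x)%:E)%E.
  by move/F_sub; rewrite /= in_itv /= lee_fin => /f0.
have := ge0_nondecreasing_set_cvg_integral (mu := mu) F_nd mF mfF fF0.
rewrite F_cup => cvgF; rewrite -(cvg_lim _ cvgF) //.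
apply: lime_le; first exact: cvgP cvgF.
apply: nearW => n; apply: bnd; have := e_gt0 n; have := e_lt n; lra.
Qed.

Lemma integral_inv_sqrt_ends_lty (a b : R) : a < b ->
  (\int[mu]_(x in `]a, b[) (inv_sqrt_ends a b x)%:E < +oo)%E.
Proof.
move=> ab; apply: le_lt_trans (ltry (4 * Num.sqrt (b - a))).
apply: ge0_integral_itv_oo_le => //.
- exact: measurable_inv_sqrt_ends.
- by move=> x _; exact: inv_sqrt_ends_ge0.
- exact: integral_inv_sqrt_ends_le.
Qed.

Lemma Rintegral_itv_oo_gt0 (k h : R -> R) (a b l : R) : a < b -> 0 < l ->
  measurable_fun `]a, b[ k -> measurable_fun `]a, b[ h ->
  (forall x, a < x < b -> l <= k x <= h x) ->
  (\int[mu]_(x in `]a, b[) (h x)%:E < +oo)%E ->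
  0 < Rintegral mu `]a, b[ k.
Proof.
move=> ab l_gt0 mk mh lkh h_fin.
have mab : measurable `]a, b[%classic by exact: measurable_itv.
have [lk kh] : (forall x, `]a, b[%classic x -> l <= k x) /\
               (forall x, `]a, b[%classic x -> k x <= h x).
  by split=> x; rewrite /= in_itv /= => /lkh /andP[].
have k_ge0 x : `]a, b[%classic x -> (0 <= (k x)%:E)%E.
  by move/lk; rewrite lee_fin; apply: le_trans; exact: ltW.
apply: fine_gt0; apply/andP; split.
- apply: (@lt_le_trans _ _ (\int[mu]_(x in `]a, b[) (cst l%:E) x)%E).
    have mu_gt0 : (0 < mu `]a, b[%classic)%E.
      by rewrite lebesgue_measure_itv /= ifT ?lte_fin // subr_gt0.
    by rewrite integral_cst // mule_gt0 // lte_fin.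
  apply: ge0_le_integral => //.
  + by move=> x _; rewrite lee_fin ltW.
  + exact/measurable_EFinP.
- apply: (le_lt_trans _ h_fin).
  by apply: ge0_le_integral => //; exact/measurable_EFinP.
Qed.

Lemma inv_sqrt_mul_le (u v : R) : 0 < u -> 0 < v ->
  (Num.sqrt (u * v))^-1 <=
  (Num.sqrt ((u + v) / 2))^-1 * ((Num.sqrt u)^-1 + (Num.sqrt v)^-1).
Proof.
wlog uv : u v / u <= v => [hwlog u0 v0|u0 v0].
  have [uv|vu] := lerP u v; first exact: hwlog.
  rewrite [u * v]mulrC [u + v]addrC [_ + (Num.sqrt v)^-1]addrC.
  by rewrite hwlog // ltW.
have s0 : 0 < (u + v) / 2 by rewrite divr_gt0 // addr_gt0.
have sv : (u + v) / 2 <= v by rewrite ler_pdivrMr //; lra.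
apply: (@le_trans _ _ ((Num.sqrt ((u + v) / 2))^-1 * (Num.sqrt u)^-1)).
  rewrite -invfM -sqrtrM ?(ltW s0) //.
  rewrite lef_pV2 ?posrE ?sqrtr_gt0 ?mulr_gt0 ?addr_gt0 //.
  by apply: ler_wsqrtr; rewrite mulrC ler_pM2l.
by apply: ler_wpM2l; rewrite ?lerDl invr_ge0 sqrtr_ge0.
Qed.

Lemma prod_ord3 (F : 'I_3 -> R) : \prod_(j < 3) F j = F i1 * F i2 * F i3.
Proof.
rewrite !big_ord_recr big_ord0 /= mul1r.
by congr (F _ * F _ * F _); apply: val_inj.
Qed.

Lemma oppr_cubicE (b : 'I_3 -> R) x :
  - cubic b x = (x - b i2) * (b i1 - x) * (x - b i3).
Proof. rewrite /cubic prod_ord3; ring. Qed.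

Lemma inv_sqrt_cubic_le (b : 'I_3 -> R) x :
  ordered_beta b -> b i2 < x < b i1 ->
  (Num.sqrt ((x - b i2) * (b i1 - x) * (x - b i3)))^-1 <=
  (Num.sqrt ((b i1 - b i2) / 2))^-1 * (Num.sqrt (b i2 - b i3))^-1 *
  inv_sqrt_ends (b i2) (b i1) x.
Proof.
move=> [_ [b23 _]] /andP[x2 x1].
have := @inv_sqrt_mul_le (x - b i2) (b i1 - x).
rewrite !subr_gt0 (_ : x - b i2 + (b i1 - x) = b i1 - b i2); last by ring.
move=> /(_ x2 x1) le_uv.
rewrite sqrtrM; last by rewrite mulr_ge0 // subr_ge0 ltW.
rewrite invfM mulrAC; apply: ler_pM => //; rewrite ?invr_ge0 ?sqrtr_ge0 //.
by rewrite lef_pV2 ?posrE ?sqrtr_gt0 ?subr_gt0 ?ler_wsqrtr ?lerD2r //; lra.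
Qed.

Lemma aperiod_gt0 (b : 'I_3 -> R) (f : R -> R) (m M : R) :
  ordered_beta b -> 0 < m ->
  (forall x, b i2 < x < b i1 -> m <= f x <= M) ->
  {in `]b i2, b i1[, continuous f} -> 0 < aperiod b f.
Proof.
move=> ob m_gt0 fb fc; have [b12 [b23 b3]] := ob.
pose w x := (x - b i2) * (b i1 - x) * (x - b i3).
pose U := (b i1 - b i2) ^+ 2 * (b i1 - b i3).
pose K := M * (Num.sqrt ((b i1 - b i2) / 2))^-1 * (Num.sqrt (b i2 - b i3))^-1.
have M_ge0 : 0 <= M.
  have /fb /andP[fm fM] : b i2 < (b i1 + b i2) / 2 < b i1.
    by apply/andP; split; lra.
  lra.
have K_ge0 : 0 <= K by rewrite /K !mulr_ge0 ?invr_ge0 ?sqrtr_ge0.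
have w_bnd x : b i2 < x < b i1 -> 0 < w x <= U.
  move=> /andP[x2 x1]; rewrite !mulr_gt0 ?subr_gt0 //=; last lra.
  by rewrite /U expr2; apply: ler_pM; rewrite ?mulr_ge0 ?ler_pM ?subr_ge0; lra.
have k_bnd x : b i2 < x < b i1 ->
    m / Num.sqrt U <= f x / Num.sqrt (w x) <=
    K * inv_sqrt_ends (b i2) (b i1) x.
  move=> x21; have /andP[w_gt0 w_le] := w_bnd x x21.
  have /andP[fm fM] := fb x x21.
  apply/andP; split.
    apply: ler_pM; rewrite ?invr_ge0 ?sqrtr_ge0 //; first exact: ltW.
    by rewrite lef_pV2 ?posrE ?sqrtr_gt0 ?ler_wsqrtr // (lt_le_trans w_gt0).
  rewrite /K -!mulrA; apply: ler_pM; rewrite ?invr_ge0 ?sqrtr_ge0 //; first lra.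
  by rewrite mulrA; exact: inv_sqrt_cubic_le.
rewrite /aperiod (_ : (fun x => _) = fun x => f x / Num.sqrt (w x)); last first.
  by apply/funext => x; rewrite oppr_cubicE.
apply: (@Rintegral_itv_oo_gt0 _ (fun x => K * inv_sqrt_ends (b i2) (b i1) x)
          _ _ (m / Num.sqrt U)) => //.
- by rewrite divr_gt0 // sqrtr_gt0 /U mulr_gt0 ?exprn_gt0 ?subr_gt0 //; lra.
- apply: open_continuous_measurable_fun; first exact: interval_open.
  move=> x; rewrite inE /= => x21.
  apply: (@continuousM _ _ f (fun y => (Num.sqrt (w y))^-1)); first exact: fc.
  apply: continuous_inv_sqrt; first by case/andP: (w_bnd x x21).
  apply: (@continuousM _ _ (fun y => (y - b i2) * (b i1 - y))
                           (fun y => y - b i3)).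
    apply: (@continuousM _ _ (fun y => y - b i2) (fun y => b i1 - y));
    apply: continuousB; (exact: cvg_id || exact: cvg_cst).
  by apply: continuousB; [exact: cvg_id | exact: cvg_cst].
- by apply: measurable_funM => //; exact: measurable_inv_sqrt_ends.
- under eq_integral do rewrite EFinM.
  rewrite ge0_integralZl_EFin // ?lte_mul_pinfty ?integral_inv_sqrt_ends_lty //.
  + by move=> x _; exact: inv_sqrt_ends_ge0.
  + by apply/measurable_EFinP; exact: measurable_inv_sqrt_ends.
Qed.

Lemma sqrt_prod_gt0 (b : 'I_3 -> R) : ordered_beta b -> 0 < sqrt_prod b.
Proof.
by move=> [b12 [b23 b3]]; rewrite sqrtr_gt0 prod_ord3 !mulr_gt0 //; lra.
Qed.

Lemma alpha0_lt0 (b : 'I_3 -> R) : ordered_beta b -> alpha0 b < 0.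
Proof.
move=> ob; have [b12 [b23 b3]] := ob.
have inv_gt0 : 0 < aperiod b (fun eta => eta^-1).
  apply: (@aperiod_gt0 b _ (b i1)^-1 (b i2)^-1) => //.
  - by rewrite invr_gt0; lra.
  - by move=> x /andP[x2 x1]; rewrite !lef_pV2 ?posrE ?ltW //; lra.
  - move=> x; rewrite in_itv /= => /andP[x2 _].
    by apply: inv_continuous; rewrite gt_eqF //; lra.
have one_gt0 : 0 < aperiod b (fun _ => 1).
  apply: (@aperiod_gt0 b _ 1 1) => // [x _|x _]; first by rewrite lexx.
  exact: cvg_cst.
by rewrite /alpha0 mulNr oppr_lt0 divr_gt0.
Qed.

Lemma H0_gt0 (b : 'I_3 -> R) : ordered_beta b -> 0 < H0 b.
Proof.
move=> ob; rewrite /H0 mulNr -mulrN mulr_gt0 ?sqrt_prod_gt0 //.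
by rewrite oppr_gt0 alpha0_lt0.
Qed.

End PeriodIntegrals.

Section WhithamSpeeds.
Variable R : realType.

Lemma CCH_speedE (nu : R) (b : 'I_3 -> R) i : sqrt_prod b != 0 ->
  CCH nu b i = Ncoef nu b + vKdV b i * H0 b.
Proof.
move=> s_neq0; rewrite /CCH /Ncoef /vKdV /H0.
set P := prod_diff b i; set Q := b i * (b i + alpha1 b).
have -> : 2 * (alpha0 b * P) / Q = 2 * alpha0 b * (P / Q) by rewrite !mulrA.
(* [P / Q] stays an atom, so [field] does not ask for [Q != 0]. *)
by set r := P / Q; field.
Qed.

Lemma vKdV_speedE (nu : R) (b : 'I_3 -> R) i : ordered_beta b ->
  vKdV b i = - (Ncoef nu b / H0 b) + CCH nu b i * (H0 b)^-1.
Proof.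
move=> ob; have H0_neq0 : H0 b != 0 by rewrite gt_eqF ?H0_gt0.
by rewrite (CCH_speedE nu) ?gt_eqF ?sqrt_prod_gt0 //; field.
Qed.

End WhithamSpeeds.

Theorem proposition5 (R : realType) (nu : R) :
  (* direct: (y, tau_-) |-> (x, t) = (X(y,tau_-), tau_-) *)
  (forall (D : set (R * R)) (beta Bt : 'I_3 -> R * R -> R) (X : R * R -> R),
    open D ->
    (forall p, D p -> ordered_beta (fun j => beta j p)) ->
    (forall p, D p ->
       [/\ differentiable X p,
           d1 X p = H0 (fun j => beta j p) &
           d2 X p = Ncoef nu (fun j => beta j p)]) ->
    (forall p, D p -> forall i, differentiable (Bt i) (X p, p.2)) ->
    (forall p, D p -> forall i, beta i p = Bt i (X p, p.2)) ->
    whitham_sol D (@vKdV R) beta ->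
    whitham_sol [set (X p, p.2) | p in D] (CCH nu) Bt) /\
  (* inverse: (x, t) |-> (y, tau_-) = (Y(x,t), t) *)
  (forall (E : set (R * R)) (Bt beta : 'I_3 -> R * R -> R) (Y : R * R -> R),
    open E ->
    (forall q, E q -> ordered_beta (fun j => Bt j q)) ->
    (forall q, E q ->
       [/\ differentiable Y q,
           d1 Y q = (H0 (fun j => Bt j q))^-1 &
           d2 Y q = - (Ncoef nu (fun j => Bt j q) / H0 (fun j => Bt j q))]) ->
    (forall q, E q -> forall i, differentiable (beta i) (Y q, q.2)) ->
    (forall q, E q -> forall i, Bt i q = beta i (Y q, q.2)) ->
    whitham_sol E (CCH nu) Bt ->
    whitham_sol [set (Y q, q.2) | q in E] (@vKdV R) beta).
Proof.
split.
- move=> D beta Bt X oD ob hX dBt betaE.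
  apply: whitham_sol_reciprocal => // [p Dp | p Dp i]; first by case: (hX p Dp).
  have [_ -> ->] := hX p Dp.
  by rewrite CCH_speedE // gt_eqF // sqrt_prod_gt0 //; exact: ob.
- move=> E Bt beta Y oE ob hY dbeta BtE.
  apply: whitham_sol_reciprocal => // [q Eq | q Eq i]; first by case: (hY q Eq).
  have [_ -> ->] := hY q Eq.
  by rewrite (vKdV_speedE _ nu) //; exact: ob.
Qed.
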